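(* The map $\Psi=(F,A)\colon \mathcal{T}(\mathrm{OP})\to I^{\mathcal D}\times I^{\mathbb N}$ defined below is a homeomorphism satisfying $\Psi\circ\kappa(g)=\operatorname{diag}(g)\circ\Psi$ for every $g\in\mathcal D$. In particular, $(\mathcal{T}(\mathrm{OP}),\kappa)$ and $(I^{\mathcal D}\times I^{\mathbb N},\operatorname{diag})$ are isomorphic as topological $\mathcal D$-spaces.
   Context: Let $I=\{0,1\}$. The graded graph $\mathrm{OP}$ (graph of ordered pairs) has vertex sets $\mathrm{OP}_0=I$ and $\mathrm{OP}_{n+1}=\mathrm{OP}_n\times\mathrm{OP}_n$. For each $v=(v_0,v_1)\in\mathrm{OP}_{n+1}$ there is an edge of index $0$ from $v_0$ to $v$ and an edge of index $1$ from $v_1$ to $v$ (two distinct edges if $v_0=v_1$), and there are no other edges. $\mathcal T(\mathrm{OP})$ is the set of infinite paths $x=(v_0,e_0,v_1,e_1,\dots)$ with $v_n\in\mathrm{OP}_n$ and $e_n$ an edge from $v_n$ to $v_{n+1}$, with the topology whose base consists of cylinder sets (paths with a prescribed initial segment). A path is determined by its vertex on floor $N$ together with the indices of its edges below floor $N$. Let $\mathcal D=\bigoplus_{i\ge 0}\mathbb Z/2\mathbb Z$ with generators $g_0,g_1,\dots$, and $\mathcal D_n=\langle g_0,\dots,g_{n-1}\rangle$, $\mathcal D_0=\{0\}$. The canonical action $\kappa$ of $\mathcal D$ on $\mathcal T(\mathrm{OP})$ is defined on generators: $\kappa(g_n)x$ is the path that coincides with $x$ from floor $n+1$ on, whose edge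 from floor $n$ to floor $n+1$ has index different from the corresponding edge of $x$, and whose edges between floors $i$ and $i+1$, $0\le i<n$, have the same indices as those of $x$. $I^{\mathbb N}$ is the set of sequences $\alpha=(\alpha_i)_{i\ge1}$ with coordinatewise addition mod 2; $I^{\mathcal D}$ is the set of configurations $w\colon\mathcal D\to I$; both carry the product topology. Let $\tau\colon\mathcal D\to I^{\mathbb N}$, $\tau(\sum_i\alpha_i g_{i-1})=(\alpha_i)_{i\ge1}$. The action $\operatorname{diag}$ of $\mathcal D$ on $I^{\mathcal D}\times I^{\mathbb N}$ is $\operatorname{diag}(g)(w,\alpha)=(w(\cdot+g),\alpha+\tau(g))$. Define $\Phi$ assigning to each $v\in\mathrm{OP}_n$ a configuration $\Phi[v]\in I^{\mathcal D_n}$: for $v\in\mathrm{OP}_0$, $\Phi[v](0)=v$; for $v=(v_0,v_1)\in\mathrm{OP}_{n+1}$, $\Phi[v](h)=\Phi[v_0](h)$ for $h\in\mathcal D_n$ and $\Phi[v](h)=\Phi[v_1](g_n+h)$ for $h\in\mathcal D_{n+1}\setminus\mathcal D_n$. For a path $x$ with vertices $v_n$ and edges $e_n$, let $A[x]=\alpha$ where $\alpha_n$ is the index of $e_{n-1}$ ($n\ge1$), and let $F[x]\in I^{\mathcal D}$ be given by $F[x](g)=\Phi[v_n](g+\sum_{i=0}^{n-1}\alpha_{i+1}g_i)$ for $g\in\mathcal D_n$, $n\ge1$ (these prescriptions are consistent). Set $\Psi[x]=(F[x],A[x])$. *)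

From Stdlib Require Import Arith Lia List Bool.

(* Vertices of all floors live in one type of binary trees;
   OP_0 = leaves (= I), OP_{n+1} = pairs (Node v0 v1) of elements of OP_n. *)
Inductive tree : Type := Leaf (b : bool) | Node (t0 t1 : tree).

Fixpoint isOP (n : nat) (t : tree) : bool :=
  match n, t with
  | 0, Leaf _ => true
  | S m, Node a b => isOP m a && isOP m b
  | _, _ => false
  end.

(* the source of the edge of index i into the vertex t = (v0,v1) is v_i *)
Definition child (i : bool) (t : tree) : tree :=
  match t with Node a b => if i then b else a | Leaf _ => t end.

(* An infinite path: vertices v_n in OP_n, and e_n (recorded by its index)
   an edge from v_n to v_{n+1}. *)
Record path := Path {
  pv : nat -> tree;
  pe : nat -> bool;
  pv_OP : forall n, isOP n (pv n) = true;
  p_edge : forall n, child (pe n) (pv (S n)) = pv n }.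

Fixpoint desc (e : nat -> bool) (d k : nat) (w : tree) : tree :=
  match d with 0 => w | S d' => child (e k) (desc e d' (S k) w) end.

Lemma isOP_child n i t : isOP (S n) t = true -> isOP n (child i t) = true.
Proof.
  destruct t as [b|a c]; simpl; [discriminate|].
  intros H; apply andb_prop in H; destruct H, i; auto.
Qed.

Lemma isOP_desc e d : forall k w, isOP (d + k) w = true -> isOP k (desc e d k w) = true.
Proof.
  induction d as [|d IH]; intros k w H; simpl; [exact H|].
  apply isOP_child. apply IH. rewrite Nat.add_succ_r. exact H.
Qed.

(* The path that coincides with x from floor N on, and has edge indices e'
   (e' must agree with x's indices from N on). *)
Definition rec_v (x : path) (e' : nat -> bool) (N : nat) (k : nat) : tree :=
  desc e' (N - k) k (pv x (N - k + k)).

Lemma rec_v_OP x e' N k : isOP k (rec_v x e' N k) = true.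
Proof. unfold rec_v. apply isOP_desc. apply pv_OP. Qed.

Lemma rec_v_edge x e' N (H : forall k, N <= k -> e' k = pe x k) n :
  child (e' n) (rec_v x e' N (S n)) = rec_v x e' N n.
Proof.
  unfold rec_v. destruct (le_lt_dec N n) as [Hn|Hn].
  - replace (N - n) with 0 by lia. replace (N - S n) with 0 by lia. simpl.
    rewrite H by exact Hn. apply p_edge.
  - assert (E2 : N - n + n = N - S n + S n) by lia. rewrite E2.
    assert (E : N - n = S (N - S n)) by lia. rewrite E. reflexivity.
Qed.

Definition reconstruct (x : path) (e' : nat -> bool) (N : nat)
  (H : forall k, N <= k -> e' k = pe x k) : path :=
  {| pv := rec_v x e' N; pe := e'; pv_OP := rec_v_OP x e' N;
     p_edge := rec_v_edge x e' N H |}.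

(* Encoded as nat via binary expansion: g = sum_i a_i g_i  <->  sum_i a_i 2^i;
   group law = bitwise xor; g_n = 2^n; D_n = { h | h < 2^n }. *)
Definition D := nat.
Definition dadd (g h : D) : D := Nat.lxor g h.
Definition dgen (n : nat) : D := 2 ^ n.

Definition flip_at (n : nat) (e : nat -> bool) : nat -> bool :=
  fun k => if Nat.eqb k n then negb (e k) else e k.

Lemma flip_at_above n (x : path) : forall k, S n <= k -> flip_at n (pe x) k = pe x k.
Proof.
  intros k Hk. unfold flip_at. replace (Nat.eqb k n) with false; [reflexivity|].
  symmetry. apply Nat.eqb_neq. lia.
Qed.

Definition kappa_gen (n : nat) (x : path) : path :=
  reconstruct x (flip_at n (pe x)) (S n) (flip_at_above n x).

(* kappa(g) = composite of the kappa(g_i) over the bits i of g (all < g) *)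
Definition kappa (g : D) (x : path) : path :=
  fold_right (fun i acc => if Nat.testbit g i then kappa_gen i acc else acc) x (seq 0 g).

(* I^N is represented as nat -> bool with  alpha k  standing for  alpha_{k+1}. *)
Definition seqI := nat -> bool.
Definition config := D -> bool.

(* tau(sum_i alpha_i g_{i-1}) = (alpha_i)_{i>=1}  (shifted indexing) *)
Definition tau (g : D) : seqI := fun k => Nat.testbit g k.

Definition diag (g : D) (p : config * seqI) : config * seqI :=
  (fun h => fst p (dadd h g), fun k => xorb (snd p k) (tau g k)).

Fixpoint Phi (n : nat) (t : tree) (h : D) : bool :=
  match n, t with
  | 0, Leaf b => b
  | S m, Node a b => if h <? 2 ^ m then Phi m a h else Phi m b (dadd (dgen m) h)
  | _, _ => false
  end.

Definition dsum (a : nat -> bool) (n : nat) : D :=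
  fold_right dadd 0 (map (fun i => if a i then dgen i else 0) (seq 0 n)).

Definition A (x : path) : seqI := pe x.

(* F[x](g) computed at floor n = g+1 (g lies in D_{g+1}) *)
Definition F (x : path) : config :=
  fun g => Phi (S g) (pv x (S g)) (dadd g (dsum (pe x) (S g))).

Definition Psi (x : path) : config * seqI := (F x, A x).

(* T(OP): base = cylinder sets (paths with prescribed initial segment
   v_0,e_0,...,e_{n-1},v_n). *)
Definition path_open (U : path -> Prop) : Prop :=
  forall x, U x -> exists n, forall y,
    (forall k, k <= n -> pv y k = pv x k) ->
    (forall k, k < n -> pe y k = pe x k) -> U y.

(* product topology on I^D x I^N, I discrete *)
Definition prod_open (U : config * seqI -> Prop) : Prop :=
  forall p, U p -> exists (s1 s2 : list nat), forall q,
    (forall h, In h s1 -> fst q h = fst p h) ->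
    (forall k, In k s2 -> snd q k = snd p k) -> U q.

Definition continuous {X Y : Type} (oX : (X -> Prop) -> Prop) (oY : (Y -> Prop) -> Prop)
  (f : X -> Y) : Prop :=
  forall V, oY V -> oX (fun x => V (f x)).

Definition homeomorphism {X Y : Type} (oX : (X -> Prop) -> Prop) (oY : (Y -> Prop) -> Prop)
  (f : X -> Y) : Prop :=
  exists g : Y -> X, (forall x, g (f x) = x) /\ (forall y, f (g y) = y) /\
    continuous oX oY f /\ continuous oY oX g.

From Stdlib Require Import Arith Lia List Bool Btauto.
From Stdlib Require Import ProofIrrelevance FunctionalExtensionality.

(* A vertex of floor n is a complete binary tree of depth n, and [Phi n] reads
   its 2^n leaves as a configuration on D_n.  The edges of a path below floor n
   shift this configuration by s_n = sum_{i<n} alpha_{i+1} g_i; once shifted,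
   the configurations read at floors n and n+1 agree on D_n, so F[x] is well
   defined, and F[x] together with A[x] gives back every vertex: v_n is the
   tree whose configuration is F[x] shifted by s_n.  Both directions only use
   finitely many coordinates at a time, hence are continuous, and flipping the
   edge above floor n changes every s_m (m > n) by g_n, which is [diag g_n]. *)

Ltac xor_bits :=
  unfold dadd, dgen in *; apply Nat.bits_inj; intro;
  rewrite ?Nat.lxor_spec, ?Nat.bits_0; btauto.

Lemma lt_pow2_iff a n : a < 2 ^ n <-> (forall k, n <= k -> Nat.testbit a k = false).
Proof.
  split.
  - intros Ha k Hk. rewrite <- (Nat.mod_small a (2 ^ n)) by exact Ha.
    exact (Nat.mod_pow2_bits_high a n k Hk).
  - intros Hhigh. replace a with (a mod 2 ^ n).
    + apply Nat.mod_upper_bound, Nat.pow_nonzero. lia.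
    + apply Nat.bits_inj. intro k. destruct (le_lt_dec n k) as [Hk|Hk].
      * rewrite Hhigh, Nat.mod_pow2_bits_high by exact Hk. reflexivity.
      * apply Nat.mod_pow2_bits_low. exact Hk.
Qed.

Lemma lxor_lt_pow2 a b n : a < 2 ^ n -> b < 2 ^ n -> Nat.lxor a b < 2 ^ n.
Proof.
  rewrite !lt_pow2_iff. intros Ha Hb k Hk. rewrite Nat.lxor_spec, Ha, Hb; auto.
Qed.

Lemma pow2_lt_pow2_S n : 2 ^ n < 2 ^ S n.
Proof. apply Nat.pow_lt_mono_r; lia. Qed.

Lemma dadd_dgen_not_lt n h : h < 2 ^ n -> ~ dadd (dgen n) h < 2 ^ n.
Proof.
  rewrite !lt_pow2_iff. intros Hh Hsum. specialize (Hsum n (le_n n)).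
  unfold dadd, dgen in Hsum.
  rewrite Nat.lxor_spec, Hh, Nat.pow2_bits_true in Hsum by lia. discriminate.
Qed.

Lemma dadd_dgen_lt n h : h < 2 ^ S n -> ~ h < 2 ^ n -> dadd (dgen n) h < 2 ^ n.
Proof.
  rewrite !lt_pow2_iff. intros Hh Hlow k Hk. unfold dadd, dgen.
  rewrite Nat.lxor_spec, Nat.pow2_bits_eqb.
  destruct (Nat.eq_dec n k) as [<-|Hne].
  - rewrite Nat.eqb_refl. destruct (Nat.testbit h n) eqn:Hbit; [reflexivity|].
    exfalso. apply Hlow. intros j Hj.
    destruct (Nat.eq_dec j n) as [->|]; [exact Hbit|]. apply Hh. lia.
  - rewrite (proj2 (Nat.eqb_neq n k) Hne), Hh by lia. reflexivity.
Qed.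

Lemma dsum_S a n : dsum a (S n) = dadd (dsum a n) (if a n then dgen n else 0).
Proof.
  unfold dsum. rewrite seq_S, map_app, fold_right_app, Nat.add_0_l. cbn [fold_right map].
  generalize (if a n then dgen n else 0). intro c.
  induction (map _ (seq 0 n)) as [|b l IH]; cbn [fold_right]; rewrite ?IH; xor_bits.
Qed.

Lemma testbit_dsum a n k : Nat.testbit (dsum a n) k = a k && (k <? n).
Proof.
  induction n as [|n IH].
  - rewrite andb_false_r. apply Nat.bits_0.
  - rewrite dsum_S. unfold dadd, dgen. rewrite Nat.lxor_spec, IH.
    destruct (a n) eqn:Han; rewrite ?Nat.pow2_bits_eqb, ?Nat.bits_0;
      destruct (Nat.ltb_spec k n), (Nat.eqb_spec n k), (Nat.ltb_spec k (S n));
      subst; rewrite ?Han; try lia; btauto.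
Qed.

Lemma dsum_lt_pow2 a n : dsum a n < 2 ^ n.
Proof.
  apply lt_pow2_iff. intros k Hk.
  rewrite testbit_dsum, (proj2 (Nat.ltb_ge k n) Hk). apply andb_false_r.
Qed.

Lemma dsum_ext a b n : (forall k, k < n -> a k = b k) -> dsum a n = dsum b n.
Proof.
  intros Hab. apply Nat.bits_inj. intro k. rewrite !testbit_dsum.
  destruct (Nat.ltb_spec k n); [rewrite Hab by assumption|]; btauto.
Qed.

Lemma dsum_flip_at e i n : i < n -> dsum (flip_at i e) n = dadd (dsum e n) (dgen i).
Proof.
  intros Hi. unfold dadd, dgen. apply Nat.bits_inj. intro k.
  rewrite Nat.lxor_spec, !testbit_dsum, Nat.pow2_bits_eqb. unfold flip_at.
  destruct (Nat.eqb_spec k i), (Nat.eqb_spec i k), (Nat.ltb_spec k n);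
    subst; try lia; btauto.
Qed.

Lemma dsum_testbit g : dsum (Nat.testbit g) g = g.
Proof.
  apply Nat.bits_inj. intro k. rewrite testbit_dsum.
  destruct (Nat.ltb_spec k g) as [|Hk]; [btauto|].
  rewrite (proj1 (lt_pow2_iff g g) (Nat.pow_gt_lin_r 2 g (le_n 2)) k Hk). reflexivity.
Qed.

Lemma Phi_Node_low n a b h : h < 2 ^ n -> Phi (S n) (Node a b) h = Phi n a h.
Proof. intros Hh. cbn [Phi]. rewrite (proj2 (Nat.ltb_lt h _) Hh). reflexivity. Qed.

Lemma Phi_Node_high n a b h : h < 2 ^ n -> Phi (S n) (Node a b) (dadd (dgen n) h) = Phi n b h.
Proof.
  intros Hh. cbn [Phi]. rewrite (proj2 (Nat.ltb_ge _ _)).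
  - f_equal. xor_bits.
  - apply Nat.nlt_ge, dadd_dgen_not_lt, Hh.
Qed.

Fixpoint build (n : nat) (w : config) : tree :=
  match n with
  | 0 => Leaf (w 0)
  | S m => Node (build m w) (build m (fun h => w (dadd (dgen m) h)))
  end.

Lemma build_OP n w : isOP n (build n w) = true.
Proof.
  revert w. induction n as [|n IH]; intros w; cbn; [reflexivity|]. rewrite !IH. reflexivity.
Qed.

Lemma lt_pow2_S_cases n h :
  h < 2 ^ S n -> h < 2 ^ n \/ exists h', h' < 2 ^ n /\ h = dadd (dgen n) h'.
Proof.
  intros Hh. destruct (Nat.lt_ge_cases h (2 ^ n)) as [|Hge]; [now left|right].
  exists (dadd (dgen n) h). split.
  - apply dadd_dgen_lt; [exact Hh|lia].
  - xor_bits.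
Qed.

Lemma Phi_build n w h : h < 2 ^ n -> Phi n (build n w) h = w h.
Proof.
  revert w h. induction n as [|n IH]; intros w h Hh.
  - cbn in Hh. replace h with 0 by lia. reflexivity.
  - destruct (lt_pow2_S_cases n h Hh) as [Hlow|[h' [Hh' ->]]]; cbn [build].
    + rewrite Phi_Node_low, IH; auto.
    + rewrite Phi_Node_high, IH; auto.
Qed.

Lemma build_ext n w w' : (forall h, h < 2 ^ n -> w h = w' h) -> build n w = build n w'.
Proof.
  revert w w'. induction n as [|n IH]; intros w w' Hww'; cbn.
  - rewrite Hww'; [reflexivity|cbn; lia].
  - pose proof (pow2_lt_pow2_S n) as Hpow.
    f_equal; apply IH; intros h Hh; apply Hww'.
    + lia.
    + apply lxor_lt_pow2; [exact Hpow|lia].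
Qed.

Lemma build_Phi n t : isOP n t = true -> build n (Phi n t) = t.
Proof.
  revert t. induction n as [|n IH]; intros [b|t0 t1] Ht; try discriminate; [reflexivity|].
  cbn in Ht. apply andb_prop in Ht as [Ht0 Ht1]. cbn [build].
  f_equal.
  - transitivity (build n (Phi n t0)); [apply build_ext, Phi_Node_low|exact (IH t0 Ht0)].
  - transitivity (build n (Phi n t1)); [apply build_ext, Phi_Node_high|exact (IH t1 Ht1)].
Qed.

Definition F_at (x : path) (n : nat) (g : D) : bool :=
  Phi n (pv x n) (dadd g (dsum (pe x) n)).

Lemma F_at_S x n g : g < 2 ^ n -> F_at x (S n) g = F_at x n g.
Proof.
  intros Hg. unfold F_at. rewrite dsum_S.
  pose proof (p_edge x n) as Hedge. pose proof (pv_OP x (S n)) as HOP.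
  destruct (pv x (S n)) as [b|t0 t1]; [discriminate|]. rewrite <- Hedge.
  assert (Hlt : dadd g (dsum (pe x) n) < 2 ^ n)
    by (apply lxor_lt_pow2; [exact Hg|apply dsum_lt_pow2]).
  destruct (pe x n); cbn [child].
  - rewrite <- (Phi_Node_high n t0 t1) by exact Hlt. f_equal. xor_bits.
  - rewrite <- (Phi_Node_low n t0 t1) by exact Hlt. f_equal. xor_bits.
Qed.

Lemma F_at_stable x n m g : n <= m -> g < 2 ^ n -> F_at x m g = F_at x n g.
Proof.
  intros Hnm Hg. induction Hnm as [|m Hnm IH]; [reflexivity|].
  rewrite F_at_S, IH; [reflexivity|].
  apply (Nat.lt_le_trans _ _ _ Hg), Nat.pow_le_mono_r; lia.
Qed.

Lemma F_eq_F_at x n g : g < 2 ^ n -> F x g = F_at x n g.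
Proof.
  intros Hg. change (F x g) with (F_at x (S g) g).
  pose proof (Nat.pow_gt_lin_r 2 (S g) (le_n 2)).
  rewrite <- (F_at_stable x (S g) (max n (S g))), (F_at_stable x n (max n (S g))); auto; lia.
Qed.

Definition shifted_config (p : config * seqI) (n : nat) : config :=
  fun h => fst p (dadd h (dsum (snd p) n)).

Lemma Psi_inv_edge p n :
  child (snd p n) (build (S n) (shifted_config p (S n))) = build n (shifted_config p n).
Proof.
  destruct p as [w a]. unfold shifted_config. cbn [fst snd]. rewrite dsum_S.
  destruct (a n); cbn [child build];
    f_equal; apply functional_extensionality; intro h; f_equal; xor_bits.
Qed.

Definition Psi_inv (p : config * seqI) : path :=
  {| pv := fun n => build n (shifted_config p n); pe := snd p;
     pv_OP := fun n => build_OP n (shifted_config p n); p_edge := Psi_inv_edge p |}.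

Lemma path_eq (x y : path) : pv x = pv y -> pe x = pe y -> x = y.
Proof.
  destruct x as [v e Hv He], y as [v' e' Hv' He']; cbn. intros <- <-.
  rewrite (proof_irrelevance _ Hv Hv'), (proof_irrelevance _ He He'). reflexivity.
Qed.

Lemma Psi_invK x : Psi_inv (Psi x) = x.
Proof.
  apply path_eq; [|reflexivity]. apply functional_extensionality. intro n. cbn [pv Psi_inv].
  rewrite <- (build_Phi n (pv x n) (pv_OP x n)). apply build_ext. intros h Hh.
  unfold shifted_config, Psi. cbn [fst snd]. rewrite (F_eq_F_at x n).
  - unfold F_at, A. f_equal. xor_bits.
  - apply lxor_lt_pow2; [exact Hh|apply dsum_lt_pow2].
Qed.

Lemma PsiK p : Psi (Psi_inv p) = p.
Proof.
  destruct p as [w a]. unfold Psi, A. cbn [pe Psi_inv]. f_equal.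
  apply functional_extensionality. intro g. unfold F. cbn [pv Psi_inv pe].
  rewrite Phi_build.
  - unfold shifted_config. cbn [fst snd]. f_equal. xor_bits.
  - apply lxor_lt_pow2; [|apply dsum_lt_pow2].
    pose proof (Nat.pow_gt_lin_r 2 (S g) (le_n 2)). lia.
Qed.

Lemma in_le_list_max h l : In h l -> h <= list_max l.
Proof. exact (proj1 (Forall_forall _ l) (proj1 (list_max_le l _) (le_n _)) h). Qed.

Lemma Psi_continuous : continuous path_open prod_open Psi.
Proof.
  intros V HV x Hx. destruct (HV (Psi x) Hx) as [s1 [s2 Hbasic]].
  set (n := S (list_max (s1 ++ s2))).
  assert (Hs : forall h, In h (s1 ++ s2) -> h < n)
    by (intros h Hh; pose proof (in_le_list_max h _ Hh); unfold n; lia).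
  exists n. intros y Hv He. apply Hbasic.
  - intros h Hh. cbn [fst Psi].
    assert (Hn : h < 2 ^ n).
    { pose proof (Hs h (in_or_app _ _ _ (or_introl Hh))).
      pose proof (Nat.pow_gt_lin_r 2 n (le_n 2)). lia. }
    rewrite (F_eq_F_at y n h Hn), (F_eq_F_at x n h Hn). unfold F_at.
    rewrite Hv, (dsum_ext (pe y) (pe x) n); [reflexivity|exact He|lia].
  - intros k Hk. apply He, Hs, in_or_app. right. exact Hk.
Qed.

Lemma Psi_inv_continuous : continuous prod_open path_open Psi_inv.
Proof.
  intros U HU p Hp. destruct (HU (Psi_inv p) Hp) as [n Hcyl].
  exists (seq 0 (2 ^ n)), (seq 0 n). intros q Hw Ha.
  assert (Hdsum : forall k, k <= n -> dsum (snd q) k = dsum (snd p) k)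
    by (intros k Hk; apply dsum_ext; intros j Hj; apply Ha, in_seq; lia).
  apply Hcyl; cbn [pv pe Psi_inv].
  - intros k Hk. apply build_ext. intros h Hh. unfold shifted_config.
    rewrite Hdsum by exact Hk. apply Hw, in_seq. split; [lia|].
    apply (Nat.lt_le_trans _ (2 ^ k)); [|apply Nat.pow_le_mono_r; lia].
    apply lxor_lt_pow2; [exact Hh|apply dsum_lt_pow2].
  - intros k Hk. apply Ha, in_seq. lia.
Qed.

Lemma diag_0 p : diag 0 p = p.
Proof.
  destruct p as [w a]. unfold diag, tau, dadd. cbn [fst snd]. f_equal;
    apply functional_extensionality; intro h.
  - rewrite Nat.lxor_0_r. reflexivity.
  - rewrite Nat.bits_0. apply xorb_false_r.
Qed.

Lemma diag_dadd g h p : diag g (diag h p) = diag (dadd g h) p.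
Proof.
  unfold diag, tau. cbn [fst snd]. f_equal; apply functional_extensionality; intro k.
  - f_equal. xor_bits.
  - unfold dadd. rewrite Nat.lxor_spec. btauto.
Qed.

Lemma F_kappa_gen i x h : F (kappa_gen i x) h = F x (dadd h (dgen i)).
Proof.
  set (n := max (S i) (S h)).
  assert (Hh : h < 2 ^ n) by (pose proof (Nat.pow_gt_lin_r 2 n (le_n 2)); unfold n in *; lia).
  assert (Hi : dgen i < 2 ^ n) by (apply Nat.pow_lt_mono_r; unfold n; lia).
  rewrite (F_eq_F_at _ n h Hh), (F_eq_F_at x n) by (apply lxor_lt_pow2; assumption).
  unfold F_at. cbn [kappa_gen reconstruct pv pe]. unfold rec_v.
  replace (S i - n) with 0 by (unfold n; lia). cbn [desc].
  rewrite dsum_flip_at by (unfold n; lia). f_equal. xor_bits.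
Qed.

Lemma Psi_kappa_gen i x : Psi (kappa_gen i x) = diag (dgen i) (Psi x).
Proof.
  unfold Psi, diag, A. cbn [fst snd]. f_equal; apply functional_extensionality; intro k.
  - apply F_kappa_gen.
  - cbn [kappa_gen reconstruct pe]. unfold flip_at, tau, dgen.
    rewrite Nat.pow2_bits_eqb. destruct (Nat.eqb_spec k i), (Nat.eqb_spec i k);
      subst; try lia; btauto.
Qed.

Lemma Psi_fold_kappa_gen (a : nat -> bool) (l : list nat) (x : path) :
  Psi (fold_right (fun i y => if a i then kappa_gen i y else y) x l)
  = diag (fold_right dadd 0 (map (fun i => if a i then dgen i else 0) l)) (Psi x).
Proof.
  induction l as [|i l IH]; cbn [fold_right map]; [symmetry; apply diag_0|].
  destruct (a i).
  - rewrite Psi_kappa_gen, IH. apply diag_dadd.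
  - rewrite IH. f_equal. symmetry. apply Nat.lxor_0_l.
Qed.

Theorem theorem1 :
  homeomorphism path_open prod_open Psi /\
  (forall (g : D) (x : path), Psi (kappa g x) = diag g (Psi x)).
Proof.
  split.
  - exists Psi_inv.
    exact (conj Psi_invK (conj PsiK (conj Psi_continuous Psi_inv_continuous))).
  - intros g x. unfold kappa. rewrite Psi_fold_kappa_gen.
    change (fold_right dadd 0 _) with (dsum (Nat.testbit g) g). rewrite dsum_testbit.
    reflexivity.
Qed.
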